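(* Let $d\ge1$, $z\ge0$, let $0<\varphi_1\le\cdots\le\varphi_d$ and let $\tilde v_1,\ldots,\tilde v_d\in\mathbb C$ be nonzero; set $\varphi_0=z$ and $\varphi_{d+1}=+\infty$. For $\lambda>0$ with $\lambda\notin\{\varphi_1,\dots,\varphi_d\}$ define $$f(\lambda)=\lambda^2\sum_{m=1}^d\frac{\varphi_m|\tilde v_m|^2}{(\lambda-\varphi_m)^2}-\lambda+z,\qquad g(\lambda)=1-\sum_{m=1}^d\frac{\varphi_m|\tilde v_m|^2}{\lambda-\varphi_m}-\frac{z}{\lambda}-\log\lambda.$$ Let $L\in\{1,\ldots,d\}$ and $K\in\{0,\ldots,d-L\}$, and let $\lambda_1\in(\varphi_{L-1},\varphi_L)$ and $\lambda_2\in(\varphi_{L+K},\varphi_{L+K+1})$ satisfy $f(\lambda_1)=f(\lambda_2)=0$. Then $g(\lambda_1)\ge g(\lambda_2)$.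
   Context: Standing assumption of the paper for this lemma: all indices belong to the support $\mathcal S=\{m:\varphi_m|\tilde v_m|^2\ne0\}$, i.e. $\mathcal S=\{1,\ldots,d\}$. Here $\varphi_m$ are the eigenvalues of a Hermitian positive semi-definite matrix and $\tilde v_m$ the coordinates of a vector in its eigenbasis (this interpretation is not needed for the statement). *)

From Stdlib Require Import Reals.
From Coquelicot Require Import Coquelicot.
Open Scope R_scope.

Fixpoint sumR (n : nat) (F : nat -> R) : R :=
  match n with
  | O => 0
  | S k => sumR k F + F (S k)
  end.

Definition f_fun (d : nat) (z : R) (phi : nat -> R) (v : nat -> C) (lam : R) : R :=
  lam ^ 2 * sumR d (fun m => phi m * (Cmod (v m)) ^ 2 / (lam - phi m) ^ 2) - lam + z.

Definition g_fun (d : nat) (z : R) (phi : nat -> R) (v : nat -> C) (lam : R) : R :=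
  1 - sumR d (fun m => phi m * (Cmod (v m)) ^ 2 / (lam - phi m)) - z / lam - ln lam.

Definition phi_ext (z : R) (phi : nat -> R) (m : nat) : R :=
  match m with O => z | _ => phi m end.

(* lam lies in the open interval (phi_j, phi_{j+1}) with phi_0 = z, phi_{d+1} = +oo *)
Definition in_gap (d : nat) (z : R) (phi : nat -> R) (j : nat) (lam : R) : Prop :=
  phi_ext z phi j < lam /\ ((j < d)%nat -> lam < phi (S j)).

(* With alpha = (y - x) / (x (x + y)) and beta = (y - x) / (y (x + y)), the combination
   g x - g y + alpha f x + beta f y is a sum over the poles phi_m of the nonnegative terms
   phi_m^2 |v_m|^2 (y - x)^3 / ((x + y) (x - phi_m)^2 (y - phi_m)^2), plus
   ln y - ln x - 2 (y - x) / (x + y) >= 0; the contributions of z cancel exactly.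
   As f x = f y = 0, this gives g x >= g y.  The gap hypotheses only serve to
   ensure 0 < x < y and that neither x nor y is a pole. *)
From Stdlib Require Import Reals Lra Lia.
From Coquelicot Require Import Coquelicot.
Open Scope R_scope.

Lemma sumR_nonneg (n : nat) (F : nat -> R) :
  (forall m, (1 <= m <= n)%nat -> 0 <= F m) -> 0 <= sumR n F.
Proof.
  induction n as [|n IH]; intros HF; simpl; [lra|].
  assert (0 <= sumR n F) by (apply IH; intros m Hm; apply HF; lia).
  assert (0 <= F (S n)) by (apply HF; lia).
  lra.
Qed.

Lemma ln_sub_ge (x y : R) : 0 < x -> x < y -> 2 * (y - x) / (x + y) <= ln y - ln x.
Proof.
  intros Hx Hxy.
  set (h := fun u => ln u - ln x - 2 * (u - x) / (u + x)).
  set (h' := fun u => (u - x) ^ 2 / (u * (u + x) ^ 2)).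
  destruct (MVT_cor2 h h' x y) as [c [Hhc Hc]]; [lra| |].
  - intros c Hc. apply is_derive_Reals. unfold h, h'.
    auto_derive; [repeat split; lra | field; lra].
  - assert (Hhx : h x = 0) by (unfold h; field; lra).
    assert (0 <= h' c).
    { unfold h'. apply Rmult_le_pos; [nra|].
      apply Rlt_le, Rinv_0_lt_compat, Rmult_lt_0_compat; [lra | nra]. }
    assert (0 <= h y) by nra.
    unfold h in *. rewrite (Rplus_comm y x) in *. lra.
Qed.

(* Contribution of a pole [p] with weight [a] to the combination of the header;
   the coefficient [(y - x) x / (x + y)] is [alpha x^2], and [(y - x) y / (x + y)]
   is [beta y^2]. *)
Definition pole_term (x y p a : R) : R :=
  a / (y - p) - a / (x - p)
  + (y - x) * x / (x + y) * (a / (x - p) ^ 2)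
  + (y - x) * y / (x + y) * (a / (y - p) ^ 2).

Lemma pole_term_nonneg (x y p w : R) :
  0 < x -> x < y -> 0 <= w -> p <> x -> p <> y -> 0 <= pole_term x y p (p * w).
Proof.
  intros Hx Hxy Hw Hpx Hpy.
  assert (Hx' : 0 < (x - p) ^ 2) by (apply pow2_gt_0; lra).
  assert (Hy' : 0 < (y - p) ^ 2) by (apply pow2_gt_0; lra).
  replace (pole_term x y p (p * w))
    with (p ^ 2 * w * (y - x) ^ 3 / ((x + y) * (x - p) ^ 2 * (y - p) ^ 2))
    by (unfold pole_term; field; repeat split; lra).
  apply Rmult_le_pos.
  - apply Rmult_le_pos; [apply Rmult_le_pos; [apply pow2_ge_0 | lra] | apply pow_le; lra].
  - apply Rlt_le, Rinv_0_lt_compat, Rmult_lt_0_compat; [apply Rmult_lt_0_compat|]; lra.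
Qed.

Lemma sumR_pole_term (n : nat) (x y : R) (p a : nat -> R) :
  sumR n (fun m => pole_term x y (p m) (a m))
  = sumR n (fun m => a m / (y - p m)) - sumR n (fun m => a m / (x - p m))
    + (y - x) * x / (x + y) * sumR n (fun m => a m / (x - p m) ^ 2)
    + (y - x) * y / (x + y) * sumR n (fun m => a m / (y - p m) ^ 2).
Proof.
  induction n as [|n IH]; cbn [sumR]; [ring | rewrite IH; unfold pole_term; ring].
Qed.

Lemma g_sub_g_add_f (d : nat) (z : R) (phi : nat -> R) (v : nat -> C) (x y : R) :
  0 < x -> 0 < y ->
  g_fun d z phi v x - g_fun d z phi v y
  + (y - x) / (x * (x + y)) * f_fun d z phi v x
  + (y - x) / (y * (x + y)) * f_fun d z phi v y
  = sumR d (fun m => pole_term x y (phi m) (phi m * Cmod (v m) ^ 2))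
    + (ln y - ln x - 2 * (y - x) / (x + y)).
Proof.
  intros Hx Hy. rewrite sumR_pole_term. unfold g_fun, f_fun. field; lra.
Qed.

Section Gaps.

Variables (d : nat) (z : R) (phi : nat -> R).
Hypothesis phi_step : forall m, (1 <= m < d)%nat -> phi m <= phi (S m).

Lemma phi_le (i j : nat) : (1 <= i)%nat -> (i <= j <= d)%nat -> phi i <= phi j.
Proof.
  intros Hi [Hij Hj]. induction Hij as [|j Hij IH]; [lra|].
  apply Rle_trans with (phi j); [apply IH; lia | apply phi_step; lia].
Qed.

Lemma in_gap_not_pole (j m : nat) (lam : R) :
  (j <= d)%nat -> in_gap d z phi j lam -> (1 <= m <= d)%nat -> phi m <> lam.
Proof.
  intros Hj [Hlo Hhi] Hm. destruct (Nat.le_gt_cases m j) as [Hmj|Hjm].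
  - destruct j as [|j]; [lia|]. simpl in Hlo.
    assert (phi m <= phi (S j)) by (apply phi_le; lia). lra.
  - assert (phi (S j) <= phi m) by (apply phi_le; lia).
    assert (lam < phi (S j)) by (apply Hhi; lia). lra.
Qed.

Lemma in_gap_pos (j : nat) (lam : R) :
  0 <= z -> 0 < phi 1 -> (j <= d)%nat -> in_gap d z phi j lam -> 0 < lam.
Proof.
  intros Hz Hphi1 Hj [Hlo _]. destruct j as [|j]; simpl in Hlo; [lra|].
  assert (phi 1 <= phi (S j)) by (apply phi_le; lia). lra.
Qed.

Lemma in_gap_lt (j k : nat) (x y : R) :
  (j < k <= d)%nat -> in_gap d z phi j x -> in_gap d z phi k y -> x < y.
Proof.
  intros Hjk [_ Hx] [Hy _]. destruct k as [|k]; [lia|]. simpl in Hy.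
  assert (x < phi (S j)) by (apply Hx; lia).
  assert (phi (S j) <= phi (S k)) by (apply phi_le; lia). lra.
Qed.

End Gaps.

Theorem lemma5 (d : nat) (z : R) (phi : nat -> R) (v : nat -> C)
  (L K : nat) (lam1 lam2 : R) :
  (1 <= d)%nat ->
  0 <= z ->
  0 < phi 1%nat ->
  (forall m, (1 <= m < d)%nat -> phi m <= phi (S m)) ->
  (forall m, (1 <= m <= d)%nat -> v m <> 0%C) ->
  (1 <= L <= d)%nat ->
  (K <= d - L)%nat ->
  in_gap d z phi (L - 1) lam1 ->
  in_gap d z phi (L + K) lam2 ->
  f_fun d z phi v lam1 = 0 ->
  f_fun d z phi v lam2 = 0 ->
  g_fun d z phi v lam1 >= g_fun d z phi v lam2.
Proof.
  intros _ Hz Hphi1 Hstep _ HL HK Hgap1 Hgap2 Hf1 Hf2.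
  assert (Hpos1 : 0 < lam1) by (apply (in_gap_pos d z phi Hstep (L - 1)); auto; lia).
  assert (Hlt : lam1 < lam2) by (apply (in_gap_lt d z phi Hstep (L - 1) (L + K)); auto; lia).
  assert (Hsum : 0 <= sumR d (fun m => pole_term lam1 lam2 (phi m) (phi m * Cmod (v m) ^ 2))).
  { apply sumR_nonneg. intros m Hm. apply pole_term_nonneg; auto.
    - apply pow2_ge_0.
    - apply (in_gap_not_pole d z phi Hstep (L - 1)); auto; lia.
    - apply (in_gap_not_pole d z phi Hstep (L + K)); auto; lia. }
  pose proof (ln_sub_ge lam1 lam2 Hpos1 Hlt) as Hln.
  pose proof (g_sub_g_add_f d z phi v lam1 lam2 Hpos1 ltac:(lra)) as Hcomb.
  rewrite Hf1, Hf2 in Hcomb. lra.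
Qed.
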